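(* Let $I$ and $J$ be disjoint subsets of $\mathbb N$, $v$ a value, $p_i\in[0,1]$ ($i\in I$), $q_j\in[0,1]$ ($j\in J$), and let $M$ be a well-formed network with $M\equiv N\mid\prod_{i\in I}m_i[\mathsf{snd}\langle v\rangle_{p_i}]^{\nu_{m_i}}\mid\prod_{j\in J}n_j[\mathsf{fwd}_{q_j}]^{\nu_{n_j}}$ such that for all $i\in I$: (1) $\{n_j: j\in J\}\subseteq\nu_{m_i}\subseteq\mathrm{nds}(M)$; (2) every node $k[P]^\mu$ of $N$ with $k\in\nu_{m_i}$ satisfies $\neg\mathrm{rcv}(P)$. Let $O=N\mid\prod_{i\in I}m_i[\mathsf{nil}]^{\nu_{m_i}}\mid\prod_{j\in J}n_j[\mathsf{resnd}\langle v\rangle_{q_j}]^{\nu_{n_j}}$ and, for any partition $I_1\cup I_2\cup I_3$ of $I$, $O_{I_1,I_2,I_3}=N\mid\prod_{i\in I_1}m_i[{!}\langle v\rangle]^{\nu_{m_i}}\mid\prod_{i\in I_2}m_i[\mathsf{nil}]^{\nu_{m_i}}\mid\prod_{i\in I_3}m_i[\mathsf{snd}\langle v\rangle_{p_i}]^{\nu_{m_i}}\mid\prod_{j\in J}n_j[\mathsf{resnd}\langle v\rangle_{q_j}]^{\nu_{n_j}}$. Then $O_{I_1,I_2,I_3}\overset{\hat\tau}{\Longrightarrow}\overline O$.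
   Context: The process calculus pTCWS. Processes $P,Q$ and probabilistic choices $C,D$ are $P ::= \mathsf{nil} \mid {!}\langle u\rangle.C \mid \lfloor ?(x).C\rfloor D \mid \tau.C \mid \sigma.C \mid X \mid \mathsf{fix}\,X.P$ and $C ::= \bigoplus_{i\in I} p_i{:}P_i$ ($I$ finite non-empty, $p_i\in(0,1]$, $\sum_i p_i=1$); in $\mathsf{fix}\,X.P$ every occurrence of $X$ is time-guarded (under a $\sigma$-prefix or in a timeout branch $D$). $1{:}P$ is written $P$; $P\oplus_pQ$ is $p{:}P\oplus(1-p){:}Q$; ${!}\langle v\rangle$ is ${!}\langle v\rangle.\mathsf{nil}$; $?(x).C$ abbreviates $\mathsf{fix}\,X.\lfloor ?(x).C\rfloor X$ ($X$ not free in $C$). Networks: $M::=\mathbf 0\mid M_1\mid M_2\mid n[P]^\nu\mid\bot$, where $n[P]^\nu$ is a node named $n$ running closed process $P$ with neighbour set $\nu$, and $\bot$ is a stuck network; $\prod$ is iterated $\mid$; $\mathrm{nds}(M)$ is the set of node names. Structural congruence $\equiv$: least equivalence preserved by $\mid$, making $\mid$ a commutative monoid with unit $\mathbf 0$, with $n[\mathsf{fix}\,X.P]^\nu\equiv n[P\{\mathsf{fix}\,X.P/X\}]^\nu$. Well-formed: no node is its own neighbour, distinct names, symmetric neighbourhood, connected neighbour graph; all networks are well-formed. $\mathrm{rcv}(P)$ holds iff $n[P]^\nu\equiv n[\lfloor ?(x).C\rfloor D]^\nu$ for some $x,C,D$. Semantics: finite-support probability distributions on networks, $\overline M$ Dirac;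 $[\![n[\bigoplus_i p_i{:}P_i]^\nu]\!]=\sum_ip_i\overline{n[P_i]^\nu}$; $(\Delta\mid\Theta)(M_1\mid M_2)=\Delta(M_1)\Theta(M_2)$. Transitions $M\xrightarrow{\lambda}\Delta$, $\lambda\in\{m!v\triangleright\nu, m?v,\tau,\sigma\}$, form the least relation closed under: (Snd) $m[{!}\langle v\rangle.C]^\nu\xrightarrow{m!v\triangleright\nu}[\![m[C]^\nu]\!]$; (Rcv) if $m\in\nu$: $n[\lfloor ?(x).C\rfloor D]^\nu\xrightarrow{m?v}[\![n[C\{v/x\}]^\nu]\!]$; $\mathbf 0\xrightarrow{m?v}\overline{\mathbf 0}$; (RcvEnb) if $\neg(m\in\nu\wedge\mathrm{rcv}(P))$ and $m\ne n$: $n[P]^\nu\xrightarrow{m?v}\overline{n[P]^\nu}$; (RcvPar) $M\xrightarrow{m?v}\Delta$, $N\xrightarrow{m?v}\Theta$ give $M\mid N\xrightarrow{m?v}\Delta\mid\Theta$; (Bcast) $M\xrightarrow{m!v\triangleright\nu}\Delta$, $N\xrightarrow{m?v}\Theta$ give $M\mid N\xrightarrow{m!v\triangleright(\nu\setminus\mathrm{nds}(N))}\Delta\mid\Theta$ (and symmetrically); (Tau) $m[\tau.C]^\nu\xrightarrow{\tau}[\![m[C]^\nu]\!]$; (TauPar) $M\xrightarrow{\tau}\Delta$ and $N$ not of the form $\bot\mid N'$ give $M\mid N\xrightarrow{\tau}\Delta\mid\overline N$ (and symmetrically); $\mathbf 0\xrightarrow{\sigma}\overline{\mathbf 0}$;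 $n[\mathsf{nil}]^\nu\xrightarrow{\sigma}\overline{n[\mathsf{nil}]^\nu}$; (Timeout) $n[\lfloor ?(x).C\rfloor D]^\nu\xrightarrow{\sigma}[\![n[D]^\nu]\!]$; (Sleep) $n[\sigma.C]^\nu\xrightarrow{\sigma}[\![n[C]^\nu]\!]$; ($\sigma$-Par) $M\xrightarrow{\sigma}\Delta$, $N\xrightarrow{\sigma}\Theta$ give $M\mid N\xrightarrow{\sigma}\Delta\mid\Theta$; (Rec) $n[P\{\mathsf{fix}\,X.P/X\}]^\nu\xrightarrow{\lambda}\Delta$ gives $n[\mathsf{fix}\,X.P]^\nu\xrightarrow{\lambda}\Delta$; (ShhSnd) $M\xrightarrow{m!v\triangleright\emptyset}\Delta$ gives $M\xrightarrow{\tau}\Delta$. $\bot$ has no transitions. Weak transitions: $M\xrightarrow{\hat\tau}\Delta$ iff $M\xrightarrow{\tau}\Delta$ or $\Delta=\overline M$; for a sub-distribution $\Delta=\sum_{i\in I}p_i\overline{M_i}$, $\Delta\xrightarrow{\hat\tau}\Theta$ iff $M_i\xrightarrow{\hat\tau}\Theta_i$ for all $i$ and $\Theta=\sum_ip_i\Theta_i$; $\overset{\hat\tau}{\Longrightarrow}$ is the reflexive-transitive closure of $\xrightarrow{\hat\tau}$ (starting from $\overline M$). Gossip processes: $\mathsf{snd}\langle u\rangle_p=\tau.({!}\langle u\rangle\oplus_p\mathsf{nil})$, $\mathsf{resnd}\langle u\rangle_p=\sigma.\mathsf{snd}\langle u\rangle_p$, $\mathsf{fwd}_p=?(x).\mathsf{resnd}\langle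 x\rangle_p$. *)

From Stdlib Require Import Reals List Permutation Relations ClassicalEpsilon.
Import ListNotations.
Open Scope R_scope.

Set Implicit Arguments.

Section PTCWS.

Variable V : Type.

Inductive term : Type :=
| TVal (v : V)
| TVar (x : nat).

(** Processes; a probabilistic choice  (+)_{i in I} p_i : P_i  is the finite
    list  [(p_1,P_1); ...; (p_k,P_k)]. *)
Inductive proc : Type :=
| Nil
| Snd (u : term) (C : list (R * proc))
| RcvTO (x : nat) (C : list (R * proc)) (D : list (R * proc)) (* |_ ?(x).C _| D *)
| Tau (C : list (R * proc))
| Sigma (C : list (R * proc))
| PVar (X : nat)
| Fix (X : nat) (P : proc).

Definition choice := list (R * proc).

(** Substitution of a value v for the variable x (the substituted term is
    closed, so no capture can occur; ?(x) rebinds x in C only). *)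
Fixpoint subst_val (v : V) (x : nat) (P : proc) : proc :=
  let st u := match u with TVar y => if Nat.eqb y x then TVal v else u | _ => u end in
  match P with
  | Nil => Nil
  | Snd u C => Snd (st u) (map (fun pq => (fst pq, subst_val v x (snd pq))) C)
  | RcvTO y C D =>
      RcvTO y (if Nat.eqb y x then C
               else map (fun pq => (fst pq, subst_val v x (snd pq))) C)
            (map (fun pq => (fst pq, subst_val v x (snd pq))) D)
  | Tau C => Tau (map (fun pq => (fst pq, subst_val v x (snd pq))) C)
  | Sigma C => Sigma (map (fun pq => (fst pq, subst_val v x (snd pq))) C)
  | PVar X => PVar X
  | Fix X Q => Fix X (subst_val v x Q)
  end.

Definition subst_val_choice (v : V) (x : nat) (C : choice) : choice :=
  map (fun pq => (fst pq, subst_val v x (snd pq))) C.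

Fixpoint subst_proc (Q : proc) (X : nat) (P : proc) : proc :=
  match P with
  | Nil => Nil
  | Snd u C => Snd u (map (fun pq => (fst pq, subst_proc Q X (snd pq))) C)
  | RcvTO y C D =>
      RcvTO y (map (fun pq => (fst pq, subst_proc Q X (snd pq))) C)
              (map (fun pq => (fst pq, subst_proc Q X (snd pq))) D)
  | Tau C => Tau (map (fun pq => (fst pq, subst_proc Q X (snd pq))) C)
  | Sigma C => Sigma (map (fun pq => (fst pq, subst_proc Q X (snd pq))) C)
  | PVar Y => if Nat.eqb Y X then Q else PVar Y
  | Fix Y P' => if Nat.eqb Y X then Fix Y P' else Fix Y (subst_proc Q X P')
  end.

Inductive network : Type :=
| Zero
| Par (M1 M2 : network)
| Node (n : nat) (P : proc) (nu : list nat)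
| Bot.

Fixpoint nds (M : network) : list nat :=
  match M with
  | Zero | Bot => []
  | Par M1 M2 => nds M1 ++ nds M2
  | Node n _ _ => [n]
  end.

Fixpoint nodes (M : network) : list (nat * proc * list nat) :=
  match M with
  | Zero | Bot => []
  | Par M1 M2 => nodes M1 ++ nodes M2
  | Node n P nu => [(n, P, nu)]
  end.

Fixpoint has_bot (M : network) : Prop :=
  match M with
  | Bot => True
  | Par M1 M2 => has_bot M1 \/ has_bot M2
  | _ => False
  end.

Definition prodn (f : nat -> network) (l : list nat) : network :=
  fold_right (fun i acc => Par (f i) acc) Zero l.

Inductive scong : network -> network -> Prop :=
| sc_refl M : scong M M
| sc_sym M N : scong M N -> scong N M
| sc_trans M N L : scong M N -> scong N L -> scong M L
| sc_par M M' N N' : scong M M' -> scong N N' -> scong (Par M N) (Par M' N')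
| sc_comm M N : scong (Par M N) (Par N M)
| sc_assoc M N L : scong (Par (Par M N) L) (Par M (Par N L))
| sc_unit M : scong (Par M Zero) M
| sc_fix n X P nu : scong (Node n (Fix X P) nu) (Node n (subst_proc (Fix X P) X P) nu).

Definition rcv (P : proc) : Prop :=
  exists n nu x C D, scong (Node n P nu) (Node n (RcvTO x C D) nu).

Definition node_nbrs (M : network) : list (nat * list nat) :=
  map (fun t => (fst (fst t), snd t)) (nodes M).

Definition nbr_adj (M : network) (a b : nat) : Prop :=
  exists nu, In (a, nu) (node_nbrs M) /\ In b nu /\ In b (nds M).

Definition well_formed (M : network) : Prop :=
  (forall n nu, In (n, nu) (node_nbrs M) -> ~ In n nu) /\
  NoDup (nds M) /\
  (forall n nu m mu, In (n, nu) (node_nbrs M) -> In (m, mu) (node_nbrs M) ->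
                     (In m nu <-> In n mu)) /\
  (forall a b, In a (nds M) -> In b (nds M) -> clos_refl_trans nat (nbr_adj M) a b).

(** Distributions: mass functions on networks (only finite-support ones arise). *)
Definition dist := network -> R.

Definition dirac (M : network) : dist :=
  fun N => if excluded_middle_informative (N = M) then 1 else 0.

Definition sem_node (n : nat) (C : choice) (nu : list nat) : dist :=
  fun N => fold_right (fun pq acc => fst pq * dirac (Node n (snd pq) nu) N + acc) 0 C.

Definition dpar (D T : dist) : dist :=
  fun M => match M with Par M1 M2 => D M1 * T M2 | _ => 0 end.

Definition minus_nds (nu : list nat) (N : network) : list nat :=
  filter (fun k => negb (existsb (Nat.eqb k) (nds N))) nu.

Definition not_bot_par (N : network) : Prop :=
  match N with Par Bot _ => False | _ => True end.

Inductive label : Type :=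
| LSnd (m : nat) (v : V) (nu : list nat)
| LRcv (m : nat) (v : V)
| LTau
| LSigma.

Inductive step : network -> label -> dist -> Prop :=
| st_snd m v C nu :
    step (Node m (Snd (TVal v) C) nu) (LSnd m v nu) (sem_node m C nu)
| st_rcv m n nu x C D v :
    In m nu ->
    step (Node n (RcvTO x C D) nu) (LRcv m v) (sem_node n (subst_val_choice v x C) nu)
| st_rcv0 m v : step Zero (LRcv m v) (dirac Zero)
| st_rcvenb m n P nu v :
    ~ (In m nu /\ rcv P) -> m <> n ->
    step (Node n P nu) (LRcv m v) (dirac (Node n P nu))
| st_rcvpar M N m v D T :
    step M (LRcv m v) D -> step N (LRcv m v) T -> step (Par M N) (LRcv m v) (dpar D T)
| st_bcastl M N m v nu D T :
    step M (LSnd m v nu) D -> step N (LRcv m v) T ->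
    step (Par M N) (LSnd m v (minus_nds nu N)) (dpar D T)
| st_bcastr M N m v nu D T :
    step M (LSnd m v nu) D -> step N (LRcv m v) T ->
    step (Par N M) (LSnd m v (minus_nds nu N)) (dpar T D)
| st_tau m C nu : step (Node m (Tau C) nu) LTau (sem_node m C nu)
| st_taul M N D :
    step M LTau D -> not_bot_par N -> step (Par M N) LTau (dpar D (dirac N))
| st_taur M N D :
    step M LTau D -> not_bot_par N -> step (Par N M) LTau (dpar (dirac N) D)
| st_sig0 : step Zero LSigma (dirac Zero)
| st_signil n nu : step (Node n Nil nu) LSigma (dirac (Node n Nil nu))
| st_timeout n x C D nu : step (Node n (RcvTO x C D) nu) LSigma (sem_node n D nu)
| st_sleep n C nu : step (Node n (Sigma C) nu) LSigma (sem_node n C nu)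
| st_sigpar M N D T :
    step M LSigma D -> step N LSigma T -> step (Par M N) LSigma (dpar D T)
| st_rec n X P nu l D :
    step (Node n (subst_proc (Fix X P) X P) nu) l D -> step (Node n (Fix X P) nu) l D
| st_shh M m v D : step M (LSnd m v []) D -> step M LTau D.

Definition tau_hat (M : network) (D : dist) : Prop :=
  step M LTau D \/ D = dirac M.

Definition lift_tau_hat (D T : dist) : Prop :=
  exists l : list (R * network * dist),
    Forall (fun t => 0 < fst (fst t) /\ tau_hat (snd (fst t)) (snd t)) l /\
    (forall N, D N = fold_right (fun t acc => fst (fst t) * dirac (snd (fst t)) N + acc) 0 l) /\
    (forall N, T N = fold_right (fun t acc => fst (fst t) * snd t N + acc) 0 l).

Definition wtau (M : network) (D : dist) : Prop :=
  clos_refl_trans dist lift_tau_hat (dirac M) D.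

Definition pchoice (p : R) (P Q : proc) : choice := [(p, P); (1 - p, Q)].

Definition gsnd (u : term) (p : R) : proc :=
  Tau (pchoice p (Snd u [(1, Nil)]) Nil).

Definition gresnd (u : term) (p : R) : proc := Sigma [(1, gsnd u p)].

(** fwd_p = ?(x).resnd<x>_p = fix X. |_ ?(x).resnd<x>_p _| X   (x = 0, X = 0) *)
Definition gfwd (p : R) : proc :=
  Fix 0 (RcvTO 0 [(1, gresnd (TVar 0) p)] [(1, PVar 0)]).

Definition netO (N : network) (I J : list nat) (m n : nat -> nat)
  (nu : nat -> list nat) (v : V) (q : nat -> R) : network :=
  Par N (Par (prodn (fun i => Node (m i) Nil (nu (m i))) I)
             (prodn (fun j => Node (n j) (gresnd (TVal v) (q j)) (nu (n j))) J)).

Definition netOI (N : network) (I1 I2 I3 J : list nat) (m n : nat -> nat)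
  (nu : nat -> list nat) (v : V) (p q : nat -> R) : network :=
  Par N (Par (prodn (fun i => Node (m i) (Snd (TVal v) [(1, Nil)]) (nu (m i))) I1)
        (Par (prodn (fun i => Node (m i) Nil (nu (m i))) I2)
        (Par (prodn (fun i => Node (m i) (gsnd (TVal v) (p i)) (nu (m i))) I3)
             (prodn (fun j => Node (n j) (gresnd (TVal v) (q j)) (nu (n j))) J)))).

End PTCWS.

Arguments Nil {V}.
Arguments PVar {V}.
Arguments Zero {V}.
Arguments Bot {V}.
Arguments LTau {V}.
Arguments LSigma {V}.

(* Every sender can be driven to nil by tau-moves alone.  A node [m[!<v>]^nu]
   broadcasts to neighbours none of which is listening: those of [N] cannot
   receive by hypothesis (with the symmetry of the neighbour relation), while
   senders and forwarders (the latter already in [resnd]) do not start with an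
   input.
   Since [nu] only contains names of the network, the remaining audience of the
   broadcast is empty and the send becomes a tau-move (ShhSnd).  A node
   [m[snd<v>_p]^nu] first makes its internal choice; both branches then reach
   [m[nil]^nu], the first by the silent broadcast just described.  Silencing
   the senders of [I1 ++ I3] one at a time gives the weak transition. *)

From Pilot Require Import Defs.
From Stdlib Require Import Reals List Permutation Relations Lra.
From Stdlib Require Import FunctionalExtensionality ClassicalEpsilon.
Import ListNotations.
Open Scope R_scope.

Lemma NoDup_app_disjoint {A} {l1 l2 : list A} {x} :
  NoDup (l1 ++ l2) -> In x l1 -> In x l2 -> False.
Proof.
  induction l1 as [|a l1 IH]; simpl; intros H H1 H2; [exact H1|].
  apply NoDup_cons_iff in H as [Ha H].
  destruct H1 as [<- | H1]; [apply Ha, in_or_app; right; exact H2 | exact (IH H H1 H2)].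
Qed.

Section Networks.

Context {V : Type}.

Implicit Types (M L X : network V) (P Q : proc V) (D T : Defs.dist V).

Lemma dpar_dirac M1 M2 : dpar (dirac M1) (dirac M2) = dirac (Par M1 M2).
Proof.
  apply functional_extensionality; intros [| A B | |]; simpl; unfold dirac;
    repeat destruct excluded_middle_informative; subst; try congruence; lra.
Qed.

Definition pmix (p : R) D T : Defs.dist V := fun M => p * D M + (1 - p) * T M.

Lemma pmix_same p D : pmix p D D = D.
Proof. apply functional_extensionality; intros M; unfold pmix; lra. Qed.

Lemma dpar_pmix_l p D1 D2 T : dpar (pmix p D1 D2) T = pmix p (dpar D1 T) (dpar D2 T).
Proof. apply functional_extensionality; intros [| | |]; unfold pmix; simpl; ring. Qed.

Lemma dpar_pmix_r p T D1 D2 : dpar T (pmix p D1 D2) = pmix p (dpar T D1) (dpar T D2).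
Proof. apply functional_extensionality; intros [| | |]; unfold pmix; simpl; ring. Qed.

Lemma sem_node_single m P nu : sem_node m [(1, P)] nu = dirac (Node m P nu).
Proof. apply functional_extensionality; intros M; unfold sem_node; simpl; lra. Qed.

Lemma sem_node_pchoice m p P Q nu :
  sem_node m (pchoice p P Q) nu = pmix p (dirac (Node m P nu)) (dirac (Node m Q nu)).
Proof. apply functional_extensionality; intros M; unfold sem_node, pmix; simpl; lra. Qed.

Lemma lift_tau_hat_step M D : step M LTau D -> lift_tau_hat (dirac M) D.
Proof.
  intros H; exists [(1, M, D)].
  split; [constructor; [split; [simpl; lra | left; exact H] | constructor]|].
  split; intros; simpl; lra.
Qed.

Lemma lift_tau_hat_pmix p M1 M2 D1 D2 :
  0 <= p <= 1 -> tau_hat M1 D1 -> tau_hat M2 D2 ->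
  lift_tau_hat (pmix p (dirac M1) (dirac M2)) (pmix p D1 D2).
Proof.
  intros Hp H1 H2; unfold pmix.
  destruct (Req_dec p 0) as [->|Hp0]; [|destruct (Req_dec p 1) as [->|Hp1]].
  - exists [(1, M2, D2)].
    split; [constructor; [split; [simpl; lra | exact H2] | constructor]|].
    split; intros; simpl; lra.
  - exists [(1, M1, D1)].
    split; [constructor; [split; [simpl; lra | exact H1] | constructor]|].
    split; intros; simpl; lra.
  - exists [(p, M1, D1); (1 - p, M2, D2)].
    split; [repeat apply Forall_cons; try apply Forall_nil; split; simpl; auto; lra|].
    split; intros; simpl; lra.
Qed.

Lemma prodn_ext (F G : nat -> network V) l :
  (forall i, In i l -> F i = G i) -> prodn F l = prodn G l.
Proof. induction l as [|a l IH]; simpl; intros H; [reflexivity|]; rewrite H, IH; auto. Qed.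

Lemma prodn_app (F : nat -> network V) l1 l2 :
  scong (Par (prodn F l1) (prodn F l2)) (prodn F (l1 ++ l2)).
Proof.
  induction l1; simpl.
  - eapply sc_trans; [apply sc_comm | apply sc_unit].
  - eapply sc_trans; [apply sc_assoc | apply sc_par; [apply sc_refl | assumption]].
Qed.

Lemma prodn_perm (F : nat -> network V) l1 l2 :
  Permutation l1 l2 -> scong (prodn F l1) (prodn F l2).
Proof.
  induction 1; simpl.
  - apply sc_refl.
  - apply sc_par; [apply sc_refl | assumption].
  - eapply sc_trans; [apply sc_sym, sc_assoc|].
    eapply sc_trans; [|apply sc_assoc].
    apply sc_par; [apply sc_comm | apply sc_refl].
  - eapply sc_trans; eassumption.
Qed.

Lemma has_bot_prodn a (F : nat -> proc V) b l :
  ~ has_bot (prodn (fun i => Node (a i) (F i) (b i)) l).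
Proof. induction l; simpl; tauto. Qed.

Lemma in_nodes_prodn a (F : nat -> proc V) b l x :
  In x (nodes (prodn (fun i => Node (a i) (F i) (b i)) l)) ->
  exists i, In i l /\ x = (a i, F i, b i).
Proof.
  induction l as [|i l IH]; simpl; [tauto|].
  intros [<- | Hx]; [eauto|]. destruct (IH Hx) as (j & Hj & ->); eauto.
Qed.

Lemma node_nbrs_par M1 M2 : node_nbrs (Par M1 M2) = node_nbrs M1 ++ node_nbrs M2.
Proof. apply map_app. Qed.

Lemma node_nbrs_prodn a (F : nat -> proc V) b l :
  node_nbrs (prodn (fun i => Node (a i) (F i) (b i)) l) = map (fun i => (a i, b i)) l.
Proof. induction l; [reflexivity|]; exact (f_equal (cons _) IHl). Qed.

Lemma in_node_nbrs {k P mu M} : In (k, P, mu) (nodes M) -> In (k, mu) (node_nbrs M).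
Proof. intros H; apply in_map_iff; exists (k, P, mu); auto. Qed.

Lemma nds_node_nbrs M : nds M = map fst (node_nbrs M).
Proof. induction M; simpl; auto; rewrite node_nbrs_par, map_app; congruence. Qed.

Lemma in_nodes_nds k P mu M : In (k, P, mu) (nodes M) -> In k (nds M).
Proof. rewrite nds_node_nbrs; intros H; exact (in_map fst _ _ (in_node_nbrs H)). Qed.

Lemma not_bot_par_of M : ~ has_bot M -> not_bot_par M.
Proof. destruct M as [| [] | |]; simpl; tauto. Qed.

(* [rcv P] quantifies over all congruent forms of [P]; [rcv_head] is a syntactic
   test that is invariant under unfolding of recursion, hence under [scong]. *)
Fixpoint rcv_head P : bool :=
  match P with
  | RcvTO _ _ _ => true
  | Fix _ P' => rcv_head P'
  | _ => false
  end.

Lemma rcv_head_subst_proc Q (X : nat) P :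
  rcv_head Q = rcv_head P -> rcv_head (subst_proc Q X P) = rcv_head P.
Proof.
  induction P as [| | | | | Y | Y P' IH]; simpl; intros H; auto.
  - destruct (Nat.eqb Y X); auto.
  - destruct (Nat.eqb Y X); auto.
Qed.

Lemma scong_nodes_perm {B} (g : nat * proc V * list nat -> B) :
  (forall k (X : nat) P nu, g (k, Fix X P, nu) = g (k, subst_proc (Fix X P) X P, nu)) ->
  forall M1 M2, scong M1 M2 -> Permutation (map g (nodes M1)) (map g (nodes M2)).
Proof.
  intros Hg M1 M2 H; induction H; simpl; rewrite ?map_app.
  - reflexivity.
  - symmetry; assumption.
  - etransitivity; eassumption.
  - apply Permutation_app; assumption.
  - apply Permutation_app_comm.
  - rewrite app_assoc; reflexivity.
  - rewrite app_nil_r; reflexivity.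
  - rewrite Hg; reflexivity.
Qed.

Lemma scong_node_nbrs M1 M2 : scong M1 M2 -> Permutation (node_nbrs M1) (node_nbrs M2).
Proof. apply scong_nodes_perm; reflexivity. Qed.

Lemma not_rcv_of_rcv_head P : rcv_head P = false -> ~ rcv P.
Proof.
  intros Hr (k & nu & x & C & D & H).
  apply (scong_nodes_perm (fun y => rcv_head (snd (fst y)))) in H;
    [| intros; simpl; symmetry; apply rcv_head_subst_proc; reflexivity].
  simpl in H; apply Permutation_length_1 in H; congruence.
Qed.

Lemma step_rcv_ignore M m v :
  ~ has_bot M ->
  (forall k P mu, In (k, P, mu) (nodes M) -> k <> m /\ ~ (In m mu /\ rcv P)) ->
  step M (LRcv m v) (dirac M).
Proof.
  induction M as [| M1 IH1 M2 IH2 | k P mu |]; simpl; intros Hb H.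
  - apply st_rcv0.
  - rewrite <- dpar_dirac; apply st_rcvpar; [apply IH1 | apply IH2]; try tauto;
      intros; apply H, in_app_iff; auto.
  - destruct (H k P mu (or_introl eq_refl)); apply st_rcvenb; auto.
  - tauto.
Qed.

Inductive nctx : Type :=
| Hole
| CL (c : nctx) (L : network V)
| CR (L : network V) (c : nctx).

Fixpoint fill (c : nctx) X : network V :=
  match c with Hole => X | CL c L => Par (fill c X) L | CR L c => Par L (fill c X) end.

Fixpoint sibs (c : nctx) : list (network V) :=
  match c with Hole => [] | CL c L | CR L c => L :: sibs c end.

Fixpoint cdist (c : nctx) D : Defs.dist V :=
  match c with
  | Hole => D
  | CL c L => dpar (cdist c D) (dirac L)
  | CR L c => dpar (dirac L) (cdist c D)
  end.

Lemma cdist_dirac c X : cdist c (dirac X) = dirac (fill c X).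
Proof. induction c; simpl; rewrite ?IHc, ?dpar_dirac; reflexivity. Qed.

Lemma cdist_pmix c p D1 D2 : cdist c (pmix p D1 D2) = pmix p (cdist c D1) (cdist c D2).
Proof. induction c; simpl; rewrite ?IHc, ?dpar_pmix_l, ?dpar_pmix_r; reflexivity. Qed.

Lemma fill_additive {A} (g : network V -> list A) :
  (forall M1 M2, g (Par M1 M2) = g M1 ++ g M2) ->
  forall c X, Permutation (g (fill c X)) (g X ++ flat_map g (sibs c)).
Proof.
  intros Hg c X; induction c; simpl; rewrite ?Hg.
  - rewrite app_nil_r; reflexivity.
  - rewrite IHc, <- app_assoc; apply Permutation_app_head, Permutation_app_comm.
  - rewrite IHc, !app_assoc; apply Permutation_app_tail, Permutation_app_comm.
Qed.

Lemma has_bot_fill c X : ~ has_bot (fill c X) -> Forall (fun L => ~ has_bot L) (sibs c).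
Proof. induction c; simpl; intros H; constructor; tauto. Qed.

Lemma step_tau_fill c X D :
  Forall (@not_bot_par V) (sibs c) -> step X LTau D -> step (fill c X) LTau (cdist c D).
Proof.
  induction c; simpl; intros Hs HX; auto; inversion Hs; subst.
  - apply st_taul; auto.
  - apply st_taur; auto.
Qed.

Lemma in_minus_nds k nu M : In k (minus_nds nu M) -> In k nu /\ ~ In k (nds M).
Proof.
  unfold minus_nds; rewrite filter_In, Bool.negb_true_iff; intros [Hk Hnot].
  split; [assumption|]; intros HM.
  assert (existsb (Nat.eqb k) (nds M) = true)
    by (apply existsb_exists; exists k; split; [exact HM | apply Nat.eqb_refl]).
  congruence.
Qed.

Lemma step_bcast_fill {c X m v nu D} :
  Forall (fun L => step L (LRcv m v) (dirac L)) (sibs c) -> step X (LSnd m v nu) D ->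
  exists nu', (forall k, In k nu' -> In k nu /\ ~ In k (flat_map (@nds V) (sibs c))) /\
              step (fill c X) (LSnd m v nu') (cdist c D).
Proof.
  induction c as [| c IH L | L c IH]; simpl; intros Hs HX; [exists nu; auto | |];
    inversion Hs as [| ? ? HL Hs']; subst; destruct (IH Hs' HX) as (nu' & Hnu' & Hstep);
    exists (minus_nds nu' L); (split; [|constructor; assumption]);
    intros k Hk; apply in_minus_nds in Hk as [Hk HkL]; apply Hnu' in Hk as [Hk Hkc];
    rewrite in_app_iff; tauto.
Qed.

Lemma step_shh_fill c X m v nu D :
  Forall (fun L => step L (LRcv m v) (dirac L)) (sibs c) ->
  incl nu (flat_map (@nds V) (sibs c)) ->
  step X (LSnd m v nu) D -> step (fill c X) LTau (cdist c D).
Proof.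
  intros Hs Hnu HX; destruct (step_bcast_fill Hs HX) as ([| k nu'] & Hnu' & Hstep).
  - exact (st_shh Hstep).
  - destruct (Hnu' k (or_introl eq_refl)) as [Hk Hkc]; contradiction (Hnu k Hk).
Qed.

(* A broadcast by [m] to [nu] inside [M] is received by nobody. *)
Definition unheard (m : nat) (nu : list nat) M : Prop :=
  ~ has_bot M /\ NoDup (nds M) /\ ~ In m nu /\ incl nu (nds M) /\
  (forall k P mu, In (k, P, mu) (nodes M) -> In m mu -> ~ rcv P).

Definition deaf_ctx (c : nctx) (m : nat) (v : V) : Prop :=
  Forall (fun L => not_bot_par L /\ step L (LRcv m v) (dirac L)) (sibs c).

Lemma deaf_ctx_of_unheard {c m P nu v} :
  unheard m nu (fill c (Node m P nu)) ->
  deaf_ctx c m v /\ incl nu (flat_map (@nds V) (sibs c)).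
Proof.
  intros (Hbot & Hnd & Hself & Hnu & Hdeaf); unfold deaf_ctx.
  pose proof (fill_additive (@nodes V) (fun _ _ => eq_refl) c (Node m P nu)) as Hnodes.
  pose proof (fill_additive (@nds V) (fun _ _ => eq_refl) c (Node m P nu)) as Hnds.
  simpl in Hnodes, Hnds.
  assert (Hfresh : ~ In m (flat_map (@nds V) (sibs c))).
  { apply (Permutation_NoDup Hnds) in Hnd; inversion Hnd; assumption. }
  split.
  - apply Forall_forall; intros L HL.
    assert (HbL : ~ has_bot L) by exact (proj1 (Forall_forall _ _) (has_bot_fill _ _ Hbot) L HL).
    split; [apply not_bot_par_of, HbL|].
    apply step_rcv_ignore; [exact HbL|]; intros k Q mu Hx; split.
    + intros ->; apply Hfresh, in_flat_map; exists L; eauto using in_nodes_nds.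
    + intros [Hm Hr]; refine (Hdeaf k Q mu _ Hm Hr).
      apply (Permutation_in _ (Permutation_sym Hnodes)); right; apply in_flat_map; eauto.
  - intros k Hk; destruct (Permutation_in _ Hnds (Hnu k Hk)) as [<- | Hk']; tauto.
Qed.

Lemma step_fill_snd_nil c m nu v :
  deaf_ctx c m v -> incl nu (flat_map (@nds V) (sibs c)) ->
  step (fill c (Node m (Snd (TVal v) [(1, Nil)]) nu)) LTau (dirac (fill c (Node m Nil nu))).
Proof.
  intros Hs Hnu; rewrite <- cdist_dirac, <- sem_node_single.
  eapply step_shh_fill; [| exact Hnu | apply st_snd].
  exact (Forall_impl _ (fun L H => proj2 H) Hs).
Qed.

Lemma wtau_fill_gsnd_nil c m nu v p :
  0 <= p <= 1 ->
  deaf_ctx c m v -> incl nu (flat_map (@nds V) (sibs c)) ->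
  wtau (fill c (Node m (gsnd (TVal v) p) nu)) (dirac (fill c (Node m Nil nu))).
Proof.
  intros Hp Hs Hnu; unfold wtau.
  rewrite <- (pmix_same p (dirac (fill c (Node m Nil nu)))).
  apply rt_trans with (pmix p (dirac (fill c (Node m (Snd (TVal v) [(1, Nil)]) nu)))
                              (dirac (fill c (Node m Nil nu)))).
  - apply rt_step, lift_tau_hat_step.
    rewrite <- !cdist_dirac, <- cdist_pmix, <- sem_node_pchoice.
    apply step_tau_fill; [exact (Forall_impl _ (fun L H => proj1 H) Hs) | apply st_tau].
  - apply rt_step, lift_tau_hat_pmix; [exact Hp | left | right; reflexivity].
    apply step_fill_snd_nil; assumption.
Qed.

Definition sender_stage (v : V) (p : R) P : Prop :=
  P = Snd (TVal v) [(1, Nil)] \/ P = Nil \/ P = gsnd (TVal v) p.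

Lemma wtau_fill_sender_nil c m nu v p P :
  0 <= p <= 1 -> sender_stage v p P -> unheard m nu (fill c (Node m P nu)) ->
  wtau (fill c (Node m P nu)) (dirac (fill c (Node m Nil nu))).
Proof.
  intros Hp HP Hun; destruct (deaf_ctx_of_unheard (v := v) Hun) as [Hs Hnu].
  destruct HP as [-> | [-> | ->]].
  - apply rt_step, lift_tau_hat_step, step_fill_snd_nil; assumption.
  - apply rt_refl.
  - apply wtau_fill_gsnd_nil; assumption.
Qed.

Inductive tmpl : Type :=
| TNet (L : network V)
| THole (i : nat)
| TPar (t1 t2 : tmpl).

Section Plug.

Variables (m : nat -> nat) (nu : nat -> list nat).

Fixpoint plug (f : nat -> proc V) (t : tmpl) : network V :=
  match t with
  | TNet L => L
  | THole i => Node (m i) (f i) (nu (m i))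
  | TPar t1 t2 => Par (plug f t1) (plug f t2)
  end.

Fixpoint holes (t : tmpl) : list nat :=
  match t with TNet _ => [] | THole i => [i] | TPar t1 t2 => holes t1 ++ holes t2 end.

Fixpoint nets (t : tmpl) : list (network V) :=
  match t with TNet L => [L] | THole _ => [] | TPar t1 t2 => nets t1 ++ nets t2 end.

Definition tprod (l : list nat) : tmpl := fold_right (fun i t => TPar (THole i) t) (TNet Zero) l.

Lemma plug_tprod f l : plug f (tprod l) = prodn (fun i => Node (m i) (f i) (nu (m i))) l.
Proof. induction l; simpl; congruence. Qed.

Lemma holes_tprod l : holes (tprod l) = l.
Proof. induction l; simpl; congruence. Qed.

Lemma nets_tprod l : nets (tprod l) = [Zero].
Proof. induction l; simpl; congruence. Qed.

Lemma plug_ext f g t : (forall i, In i (holes t) -> f i = g i) -> plug f t = plug g t.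
Proof. induction t; simpl; intros H; f_equal; auto using in_or_app, in_eq. Qed.

Lemma plug_fill f {t i} :
  NoDup (holes t) -> In i (holes t) ->
  exists c, forall g, (forall j, j <> i -> g j = f j) ->
    plug g t = fill c (Node (m i) (g i) (nu (m i))).
Proof.
  induction t as [L | j | t1 IH1 t2 IH2]; simpl; intros Hnd Hi; [contradiction| |].
  - destruct Hi as [<- | []]; exists Hole; reflexivity.
  - pose proof (NoDup_app_remove_r _ _ Hnd) as Hnd1.
    pose proof (NoDup_app_remove_l _ _ Hnd) as Hnd2.
    apply in_app_iff in Hi as [Hi | Hi].
    + destruct (IH1 Hnd1 Hi) as [c Hc]; exists (CL c (plug f t2)); intros g Hg; simpl.
      rewrite (Hc g Hg); f_equal; apply plug_ext; intros j Hj; apply Hg; intros ->.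
      apply (NoDup_app_disjoint Hnd Hi Hj).
    + destruct (IH2 Hnd2 Hi) as [c Hc]; exists (CR (plug f t1) c); intros g Hg; simpl.
      rewrite (Hc g Hg); f_equal; apply plug_ext; intros j Hj; apply Hg; intros ->.
      apply (NoDup_app_disjoint Hnd Hj Hi).
Qed.

Lemma in_nodes_plug f t x :
  In x (nodes (plug f t)) <->
  (exists L, In L (nets t) /\ In x (nodes L)) \/
  (exists i, In i (holes t) /\ x = (m i, f i, nu (m i))).
Proof.
  induction t; simpl; rewrite ?in_app_iff, ?IHt1, ?IHt2; try setoid_rewrite in_app_iff;
    firstorder; subst; eauto.
Qed.

Lemma has_bot_plug f t : Forall (fun L => ~ has_bot L) (nets t) -> ~ has_bot (plug f t).
Proof.
  induction t; simpl; intros H; rewrite ?Forall_app in H; [inversion H; assumption | tauto |].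
  intros [Hb | Hb]; tauto.
Qed.

Lemma unheard_plug M f t i :
  well_formed M -> Permutation (node_nbrs M) (node_nbrs (plug f t)) ->
  Forall (fun L => ~ has_bot L) (nets t) ->
  (forall L k P mu, In L (nets t) -> In (k, P, mu) (nodes L) -> In k (nu (m i)) -> ~ rcv P) ->
  (forall j, In j (holes t) -> rcv_head (f j) = false) ->
  In i (holes t) -> incl (nu (m i)) (nds M) ->
  unheard (m i) (nu (m i)) (plug f t).
Proof.
  intros (Hself & Hnd & Hsym & _) Hperm Hnets Hleaf Hholes Hi Hnu.
  assert (Hnds : Permutation (nds M) (nds (plug f t)))
    by (rewrite !nds_node_nbrs; apply Permutation_map, Hperm).
  assert (HiM : In (m i, nu (m i)) (node_nbrs M)).
  { apply (Permutation_in _ (Permutation_sym Hperm)), (in_node_nbrs (P := f i)).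
    apply in_nodes_plug; eauto. }
  split; [apply has_bot_plug, Hnets|].
  split; [exact (Permutation_NoDup Hnds Hnd)|].
  split; [exact (Hself _ _ HiM)|].
  split; [intros k Hk; exact (Permutation_in _ Hnds (Hnu k Hk))|].
  intros k P mu Hx Hm.
  assert (HkM : In (k, mu) (node_nbrs M))
    by exact (Permutation_in _ (Permutation_sym Hperm) (in_node_nbrs Hx)).
  apply in_nodes_plug in Hx as [(L & HL & Hx) | (j & Hj & Ex)].
  - apply (Hleaf L k P mu HL Hx), (Hsym _ _ _ _ HiM HkM), Hm.
  - injection Ex as -> -> ->; apply not_rcv_of_rcv_head, Hholes, Hj.
Qed.

End Plug.

Definition silence (K : list nat) (f : nat -> proc V) : nat -> proc V :=
  fun i => if in_dec Nat.eq_dec i K then Nil else f i.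

Definition staged (v : V) (p : nat -> R) (f : nat -> proc V) : Prop :=
  forall i, sender_stage v (p i) (f i).

Lemma staged_silence v p K f : staged v p f -> staged v p (silence K f).
Proof. intros Hf i; unfold silence; destruct in_dec; [right; left; reflexivity | apply Hf]. Qed.

Lemma wtau_plug_silence m nu v p t :
  NoDup (holes t) -> (forall i, In i (holes t) -> 0 <= p i <= 1) ->
  (forall g i, staged v p g -> In i (holes t) -> unheard (m i) (nu (m i)) (plug m nu g t)) ->
  forall K f, staged v p f -> incl K (holes t) ->
  wtau (plug m nu f t) (dirac (plug m nu (silence K f) t)).
Proof.
  intros Hnd Hp Hun K f Hf; induction K as [|a K IH]; intros HK.
  - erewrite <- plug_ext; [apply rt_refl | reflexivity].
  - eapply rt_trans; [apply IH; intros x Hx; apply HK; right; exact Hx|].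
    assert (Ha : In a (holes t)) by (apply HK; left; reflexivity).
    destruct (plug_fill m nu (silence K f) Hnd Ha) as [c Hc].
    rewrite (Hc (silence (a :: K) f)), (Hc (silence K f)) by
      (intros j Hj; unfold silence; repeat destruct in_dec; simpl in *; intuition congruence).
    replace (silence (a :: K) f a) with (@Nil V) by
      (unfold silence; destruct in_dec as [|Hna]; [reflexivity | contradiction (Hna (in_eq a K))]).
    apply wtau_fill_sender_nil with (v := v) (p := p a); [auto | apply staged_silence, Hf |].
    rewrite <- Hc by reflexivity; apply Hun; [apply staged_silence, Hf | exact Ha].
Qed.

End Networks.

Section Gossip.

Context {V : Type}.

Variables (N : network V) (I1 I2 I3 J : list nat) (m n : nat -> nat)
  (nu : nat -> list nat) (v : V) (p q : nat -> R).

Definition receivers : network V :=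
  prodn (fun j => Node (n j) (gresnd (TVal v) (q j)) (nu (n j))) J.

Definition gossip_tmpl : tmpl :=
  TPar (TNet N) (TPar (tprod I1) (TPar (tprod I2) (TPar (tprod I3) (TNet receivers)))).

Definition gossip_stage (i : nat) : proc V :=
  if in_dec Nat.eq_dec i I1 then Snd (TVal v) [(1, Nil)]
  else if in_dec Nat.eq_dec i I2 then Nil else gsnd (TVal v) (p i).

Lemma holes_gossip_tmpl : holes gossip_tmpl = I1 ++ I2 ++ I3.
Proof. simpl; rewrite !holes_tprod, app_nil_r; reflexivity. Qed.

Lemma staged_gossip_stage : staged v p gossip_stage.
Proof.
  intros i; unfold gossip_stage, sender_stage.
  destruct in_dec; [left | destruct in_dec; [right; left | right; right]]; reflexivity.
Qed.

Lemma netOI_plug :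
  NoDup (I1 ++ I2 ++ I3) -> netOI N I1 I2 I3 J m n nu v p q = plug m nu gossip_stage gossip_tmpl.
Proof.
  intros Hnd; pose proof (NoDup_app_remove_l _ _ Hnd) as Hnd23.
  unfold netOI; simpl; rewrite !plug_tprod.
  f_equal; f_equal; [|f_equal; [|f_equal]]; apply prodn_ext; intros i Hi;
    unfold gossip_stage; repeat destruct in_dec; try reflexivity; exfalso;
    eauto using NoDup_app_disjoint, in_or_app.
Qed.

Lemma scong_plug_netO I g :
  Permutation (I1 ++ I2 ++ I3) I -> (forall i, In i (I1 ++ I2 ++ I3) -> g i = Nil) ->
  scong (plug m nu g gossip_tmpl) (netO N I J m n nu v q).
Proof.
  intros Hperm Hg; set (F := fun i => Node (m i) (@Nil V) (nu (m i))).
  assert (HgF : forall l, incl l (I1 ++ I2 ++ I3) ->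
                  plug m nu g (tprod l) = prodn F l).
  { intros l Hl; rewrite plug_tprod; apply prodn_ext; intros i Hi; unfold F; rewrite Hg; auto. }
  simpl; rewrite !HgF by (intros i Hi; rewrite !in_app_iff; auto).
  apply sc_par; [apply sc_refl|].
  eapply sc_trans; [apply sc_par; [apply sc_refl | apply sc_sym, sc_assoc]|].
  eapply sc_trans; [apply sc_sym, sc_assoc|].
  apply sc_par; [|apply sc_refl].
  eapply sc_trans; [apply sc_par; [apply sc_refl | apply prodn_app]|].
  eapply sc_trans; [apply prodn_app | apply prodn_perm, Hperm].
Qed.

Lemma node_nbrs_gossip I g :
  Permutation (I1 ++ I2 ++ I3) I ->
  Permutation
    (node_nbrs (Par N (Par (prodn (fun i => Node (m i) (gsnd (TVal v) (p i)) (nu (m i))) I)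
                            (prodn (fun j => Node (n j) (gfwd V (q j)) (nu (n j))) J))))
    (node_nbrs (plug m nu g gossip_tmpl)).
Proof.
  intros Hperm; simpl; unfold receivers.
  rewrite !plug_tprod, !node_nbrs_par, !node_nbrs_prodn.
  apply Permutation_app_head; rewrite !app_assoc, <- !map_app.
  apply Permutation_app_tail, Permutation_map; rewrite <- app_assoc; symmetry; exact Hperm.
Qed.

Lemma unheard_gossip M I g i :
  well_formed M -> ~ has_bot N -> Permutation (I1 ++ I2 ++ I3) I ->
  scong M (Par N (Par (prodn (fun i => Node (m i) (gsnd (TVal v) (p i)) (nu (m i))) I)
                      (prodn (fun j => Node (n j) (gfwd V (q j)) (nu (n j))) J))) ->
  incl (nu (m i)) (nds M) ->
  (forall k P mu, In (k, P, mu) (nodes N) -> In k (nu (m i)) -> ~ rcv P) ->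
  staged v p g -> In i (I1 ++ I2 ++ I3) ->
  unheard (m i) (nu (m i)) (plug m nu g gossip_tmpl).
Proof.
  intros HWF HNb Hperm HM Hnu HN Hg Hi.
  eapply unheard_plug; [exact HWF | | | | | rewrite holes_gossip_tmpl; exact Hi | exact Hnu].
  - eapply Permutation_trans; [apply scong_node_nbrs, HM | apply node_nbrs_gossip, Hperm].
  - simpl; rewrite !nets_tprod; unfold receivers; repeat constructor; auto using has_bot_prodn.
  - simpl; rewrite !nets_tprod; intros L k P mu HL Hx Hk.
    destruct HL as [<- | [<- | [<- | [<- | [<- | []]]]]]; [eauto | contradiction.. |].
    apply in_nodes_prodn in Hx as (j & _ & Ex); injection Ex as _ -> _.
    apply not_rcv_of_rcv_head; reflexivity.
  - intros j _; destruct (Hg j) as [-> | [-> | ->]]; reflexivity.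
Qed.

End Gossip.

Theorem lemmaA4 (V : Type) (I J : list nat) (v : V) (p q : nat -> R)
  (m n : nat -> nat) (nu : nat -> list nat) (N M : network V) :
  NoDup I -> NoDup J -> (forall i, In i I -> ~ In i J) ->
  (forall i, In i I -> 0 <= p i <= 1) ->
  (forall j, In j J -> 0 <= q j <= 1) ->
  well_formed M ->
  ~ has_bot N ->
  scong M (Par N (Par (prodn (fun i => Node (m i) (gsnd (TVal v) (p i)) (nu (m i))) I)
                      (prodn (fun j => Node (n j) (gfwd V (q j)) (nu (n j))) J))) ->
  (forall i, In i I ->
     (forall j, In j J -> In (n j) (nu (m i))) /\
     (forall k, In k (nu (m i)) -> In k (nds M))) ->
  (forall i, In i I -> forall k P mu,
     In (k, P, mu) (nodes N) -> In k (nu (m i)) -> ~ rcv P) ->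
  forall I1 I2 I3 : list nat, Permutation (I1 ++ I2 ++ I3) I ->
  exists O', scong O' (netO N I J m n nu v q) /\
             wtau (netOI N I1 I2 I3 J m n nu v p q) (dirac O').
Proof.
  intros HI _ _ Hp _ HWF HNb HM Hnb Hrcv I1 I2 I3 Hperm.
  assert (HL : NoDup (I1 ++ I2 ++ I3)) by exact (Permutation_NoDup (Permutation_sym Hperm) HI).
  assert (HLI : incl (I1 ++ I2 ++ I3) I) by (intros i; apply Permutation_in, Hperm).
  exists (plug m nu (silence (I1 ++ I2 ++ I3) (gossip_stage I1 I2 v p))
               (gossip_tmpl N I1 I2 I3 J n nu v q)); split.
  - apply scong_plug_netO; [exact Hperm|].
    intros i Hi; unfold silence; destruct in_dec; tauto.
  - rewrite netOI_plug by exact HL.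
    apply wtau_plug_silence with (v := v) (p := p); rewrite ?holes_gossip_tmpl;
      [exact HL | intros i Hi; apply Hp, HLI, Hi | | apply staged_gossip_stage | apply incl_refl].
    intros g i Hg Hi; pose proof (HLI i Hi) as HiI.
    eapply unheard_gossip; [exact HWF | exact HNb | exact Hperm | exact HM
                           | exact (proj2 (Hnb i HiI)) | exact (Hrcv i HiI) | exact Hg | exact Hi].
Qed.
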